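(* Let $q$ be a prime power, $m\ge 1$, and let $\mathcal{C}\subseteq\mathbb{F}_{q^m}^n$ be an $\mathbb{F}_{q^m}$-linear code of dimension $k$ whose length $n=n_1+\dots+n_\ell$ is partitioned into $\ell$ blocks (all $n_i>0$). Let $\mathbf{H}=(\mathbf{H}^{(1)}\mid\dots\mid\mathbf{H}^{(\ell)})\in\mathbb{F}_{q^m}^{(n-k)\times n}$, $\mathbf{H}^{(i)}\in\mathbb{F}_{q^m}^{(n-k)\times n_i}$, be a parity-check matrix of $\mathcal{C}$. Let $s\ge 1$ and let $\mathbf{E}=(\mathbf{E}^{(1)}\mid\dots\mid\mathbf{E}^{(\ell)})\in\mathbb{F}_{q^m}^{s\times n}$ with $\mathbf{E}^{(i)}\in\mathbb{F}_{q^m}^{s\times n_i}$ and $\operatorname{rk}_q(\mathbf{E}^{(i)})=t_i$ for all $i\in[1:\ell]$, so that $\mathbf{E}$ has sum-rank weight $t=\sum_{i=1}^\ell t_i$, and assume $t<n-k$. Let $\mathbf{S}=\mathbf{H}\mathbf{E}^\top\in\mathbb{F}_{q^m}^{(n-k)\times s}$ and let $\mathbf{P}\in\mathbb{F}_{q^m}^{(n-k)\times(n-k)}$ with $\operatorname{rk}_{q^m}(\mathbf{P})=n-k$ be such that $\mathbf{P}\mathbf{S}$ is in row-echelon form. Then $\mathbf{P}\mathbf{S}$ has at least $n-k-t$ zero rows. Moreover, if $\mathbf{H}_{\mathrm{sub}}$ denotes the submatrix of $\mathbf{P}\mathbf{H}$ consisting of the rows corresponding to the zero rows of $\mathbf{P}\mathbf{S}$,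 then the $\mathbb{F}_{q^m}$-row space of $\mathbf{H}_{\mathrm{sub}}$ equals $\ker_r(\mathbf{E})_{q^m}\cap\mathcal{C}^\perp$, equivalently $\ker_r(\mathbf{E})_{q^m}$ intersected with the $\mathbb{F}_{q^m}$-row space of $\mathbf{H}$.
   Context: Fix an ordered basis $\mathbf{b}=(b_1,\dots,b_m)$ of $\mathbb{F}_{q^m}$ over $\mathbb{F}_q$; for $\alpha\in\mathbb{F}_{q^m}$, $\operatorname{ext}(\alpha)\in\mathbb{F}_q^{m}$ is the column vector with $\alpha=\mathbf{b}\cdot\operatorname{ext}(\alpha)$, and $\operatorname{ext}$ is applied entrywise to vectors and matrices (an $a\times b$ matrix over $\mathbb{F}_{q^m}$ becomes an $am\times b$ matrix over $\mathbb{F}_q$). For a matrix $\mathbf{X}$ over $\mathbb{F}_{q^m}$, $\operatorname{rk}_q(\mathbf{X}):=\operatorname{rk}(\operatorname{ext}(\mathbf{X}))$ over $\mathbb{F}_q$ and $\operatorname{rk}_{q^m}$ is the usual rank over $\mathbb{F}_{q^m}$. For a vector $\mathbf{x}=(\mathbf{x}^{(1)}\mid\dots\mid\mathbf{x}^{(\ell)})$ (or matrix with column blocks) the sum-rank weight w.r.t. the partition $(n_1,\dots,n_\ell)$ is $\sum_i\operatorname{rk}_q(\mathbf{x}^{(i)})$. For a matrix $\mathbf{M}$ over $\mathbb{F}_{q^m}$ with $n$ columns, $\ker_r(\mathbf{M})_{q^m}=\{\mathbf{v}\in\mathbb{F}_{q^m}^n:\mathbf{M}\mathbf{v}^\top=\mathbf{0}\}$.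 $\mathcal{C}^\perp$ is the dual code, i.e. the $\mathbb{F}_{q^m}$-row space of $\mathbf{H}$. *)

From HB Require Import structures.
From mathcomp Require Import all_boot all_order all_algebra all_field.
Set Implicit Arguments. Unset Strict Implicit. Unset Printing Implicit Defensive.
Import GRing.Theory.
Local Open Scope ring_scope.

(* ext_b : expansion of a matrix over L = F_{q^m} into a matrix over F = F_q
   w.r.t. an ordered basis b = (b_1,...,b_m) of L over F.  The entry X i c
   becomes the column block (coord b 0 (X i c), ..., coord b (m-1) (X i c));
   row (i, j) of ext X is at index i * m + j (row-major [mxvec] ordering). *)
Definition ext (F : fieldType) (L : fieldExtType F) (m : nat) (b : m.-tuple L)
  (a c : nat) (X : 'M[L]_(a, c)) : 'M[F]_(a * m, c) :=
  \matrix_(r, j) (mxvec (\matrix_(i < a, u < m) coord b u (X i j))) 0 r.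

Definition rkq (F : fieldType) (L : fieldExtType F) (m : nat) (b : m.-tuple L)
  (a c : nat) (X : 'M[L]_(a, c)) : nat := \rank (ext b X).

(* position of the leading (first nonzero) entry of a row vector; n if zero *)
Definition leading (K : fieldType) (n : nat) (v : 'rV[K]_n) : nat :=
  find (fun j : 'I_n => v 0 j != 0) (enum 'I_n).

(* row-echelon form: every row below row i that is nonzero forces row i to be
   nonzero with a strictly smaller leading position (so zero rows are at the
   bottom and leading entries move strictly to the right). *)
Definition row_echelon (K : fieldType) (r n : nat) (A : 'M[K]_(r, n)) : Prop :=
  forall i j : 'I_r, (i < j)%N -> row j A != 0 ->
    (leading (row i A) < leading (row j A))%N.

Definition zero_rows (K : fieldType) (r n : nat) (A : 'M[K]_(r, n)) : {set 'I_r} :=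
  [set i | row i A == 0].

Definition rows_of (K : fieldType) (r n : nat) (Z : {set 'I_r}) (M : 'M[K]_(r, n))
  : 'M[K]_(#|Z|, n) :=
  rowsub (fun j : 'I_#|Z| => enum_val j) M.

From HB Require Import structures.
From mathcomp Require Import all_boot all_order all_algebra all_field.
From mathcomp Require Import zify.
Import GRing.Theory.
Local Open Scope ring_scope.

(* Multiplying by the invertible P does not change the row space of H, which is
   ker G^T, the dual code.  Since P S = (P H) E^T is in echelon form, its nonzero
   rows are linearly independent, so a combination u (P H) lies in ker E^T exactly
   when u vanishes on the nonzero rows of P S: the rows of P H indexed by the zero
   rows of P S span ker E^T ∩ <H>.  That space has dimension at least
   rk H - rk E, and rk_{q^m} E <= sum_i rk_{q^m} E^(i) <= sum_i rk_q E^(i) = t. *)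

Section RowEchelon.
Context {K : fieldType}.

Lemma leading_lt {n} {v : 'rV[K]_n} : v != 0 -> (leading v < n)%N.
Proof.
move=> v_neq0; rewrite /leading -[X in (_ < X)%N]size_enum_ord -has_find.
have [j vj_neq0] : exists j, v 0 j != 0.
  apply/existsP; apply: contraR v_neq0; rewrite negb_exists => /forallP v0.
  by apply/eqP/rowP => j; rewrite mxE; apply/eqP/negbNE.
by apply/hasP; exists j; rewrite ?mem_enum.
Qed.

Lemma leading_neq0 {n} {v : 'rV[K]_n} (j : 'I_n) :
  v != 0 -> j = leading v :> nat -> v 0 j != 0.
Proof.
move=> /leading_lt; rewrite -[X in (_ < X)%N]size_enum_ord -has_find => has_nz ej.
by have := nth_find j has_nz; rewrite -/(leading v) -ej nth_ord_enum.
Qed.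

Lemma before_leading {n} (v : 'rV[K]_n) (j : 'I_n) :
  (j < leading v)%N -> v 0 j = 0.
Proof. by move=> /(before_find j); rewrite nth_ord_enum => /negbFE/eqP. Qed.

Lemma row_echelon_below_leading {r n} (A : 'M[K]_(r, n)) (i j : 'I_r) (c : 'I_n) :
  row_echelon A -> c = leading (row i A) :> nat -> (i < j)%N -> A j c = 0.
Proof.
move=> echA ci lt_ij; have [Aj0|Aj_neq0] := eqVneq (row j A) 0.
  by have := congr1 (fun v : 'rV_n => v 0 c) Aj0; rewrite !mxE.
have := before_leading (row j A) c; rewrite mxE; apply.
by rewrite ci; apply: echA.
Qed.

Lemma row_echelon_mul_eq0 {r n} {A : 'M[K]_(r, n)} {u : 'rV[K]_r} {i : 'I_r} :
  row_echelon A -> u *m A = 0 -> row i A != 0 -> u 0 i = 0.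
Proof.
move=> echA uA0 Ai_neq0; apply/eqP; move: Ai_neq0; apply: contraTT => ui_neq0.
suff coef0 : forall p (j : 'I_r), (j < p)%N -> u 0 j *: row j A = 0.
  by have /eqP := coef0 i.+1 i (ltnSn i); rewrite scaler_eq0 (negbTE ui_neq0) negbK.
elim=> [//|p IHp] j; rewrite ltnS leq_eqVlt => /orP[/eqP jp|]; last exact: IHp.
have [->|Aj_neq0] := eqVneq (row j A) 0; first by rewrite scaler0.
pose c := Ordinal (leading_lt Aj_neq0).
have /eqP := congr1 (fun v : 'rV_n => v 0 c) uA0.
rewrite !mxE (bigD1 j) //= big1 => [|k kj]; last first.
  have [lt_kj|lt_jk] := ltnP k j.
    have lt_kp : (k < p)%N by rewrite -jp.
    have := congr1 (fun v : 'rV_n => v 0 c) (IHp k lt_kp).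
    by rewrite !mxE => ->.
  rewrite (row_echelon_below_leading A j k c echA (erefl _)) ?mulr0 //.
  by rewrite ltn_neqAle lt_jk andbT; apply: contra kj => /eqP/val_inj->.
rewrite addr0 mulf_eq0 => /orP[/eqP->|]; first by rewrite scale0r.
by have := leading_neq0 c Aj_neq0 (erefl _); rewrite mxE => /negbTE->.
Qed.

Lemma rows_of_zero_rows {r n p} (M : 'M[K]_(r, n)) (N : 'M[K]_(n, p)) :
  row_echelon (M *m N) -> (rows_of (zero_rows (M *m N)) M == kermx N :&: M)%MS.
Proof.
move=> echMN; apply/andP; split.
  rewrite sub_capmx rowsub_sub andbT; apply/row_subP => j.
  by rewrite row_rowsub sub_kermx -row_mul; have := enum_valP j; rewrite inE.
apply/rV_subP => x; rewrite sub_capmx => /andP[/sub_kermxP xN0 /submxP[u def_x]].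
rewrite def_x mulmx_sum_row summx_sub // => i _.
have [iZ|iZ] := boolP (i \in zero_rows (M *m N)).
  apply/scalemx_sub/(eq_row_sub (enum_rank_in iZ i)).
  by rewrite row_rowsub enum_rankK_in.
rewrite (row_echelon_mul_eq0 echMN) ?scale0r ?sub0mx //.
  by rewrite mulmxA -def_x xN0.
by move: iZ; rewrite inE.
Qed.

End RowEchelon.

Lemma mxrank_le_rkq {F : fieldType} {L : fieldExtType F} {m} {b : m.-tuple L}
  (b_basis : basis_of fullv b) {a c} (X : 'M[L]_(a, c)) : (\rank X <= rkq b X)%N.
Proof.
have /andP[/eqP span_b _] := b_basis; rewrite /rkq -(mxrank_map (in_alg L)).
apply/mxrankS/row_subP => i.
have -> : row i X =
    \sum_(u < m) b`_u *: row (mxvec_index i u) (map_mx (in_alg L) (ext b X)).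
  apply/rowP => j; rewrite summxE mxE (coord_span (_ : X i j \in span b)).
    by apply: eq_bigr => u _; rewrite !mxE mxvecE mxE mulr_algr.
  by rewrite span_b memvf.
by apply: summx_sub => u _; apply/scalemx_sub/row_sub.
Qed.

Section Rank.
Context {K : fieldType}.

Lemma mxrank_le_sum_submxrow {l} {p_ : 'I_l -> nat} {s}
  (E : 'M[K]_(s, \sum_i p_ i)) : (\rank E <= \sum_i \rank (submxrow E i))%N.
Proof.
rewrite -mxrank_tr -{1}(submxrowK E) tr_mxrow eqmx_col.
elim/big_rec2: _ => [|i r M _ IH]; first by rewrite mxrank0.
apply: leq_trans (mxrank_adds_leqif _ _).1 _.
by rewrite genmxE mxrank_tr leq_add2l.
Qed.

Lemma eqmx_kermx_tr {k r n} {G : 'M[K]_(k, n)} {H : 'M[K]_(r, n)} :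
  G *m H^T = 0 -> \rank H = (n - \rank G)%N -> (H :=: kermx G^T)%MS.
Proof.
move=> GHt0 rankH; apply/eqmxP; rewrite -(mxrank_leqif_eq _).2.
  by rewrite mxrank_ker mxrank_tr rankH.
by apply/sub_kermxP; rewrite -[H *m _]trmxK trmx_mul trmxK GHt0 trmx0.
Qed.

Lemma mxrank_cap_kermx_ge {s n r} (E : 'M[K]_(s, n)) (H : 'M[K]_(r, n)) :
  (\rank H - \rank E <= \rank (kermx E^T :&: H))%N.
Proof.
have := mxrank_sum_cap (kermx E^T) H; rewrite mxrank_ker mxrank_tr.
by have := rank_leq_col (kermx E^T + H)%MS; have := rank_leq_col H; lia.
Qed.

End Rank.

Theorem lemma2
  (F : finFieldType) (L : fieldExtType F)
  (m : nat) (b : m.-tuple L) (hb : basis_of fullv b)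
  (l : nat) (nb : 'I_l -> nat) (hnb : forall i, (0 < nb i)%N)
  (k : nat)
  (G : 'M[L]_(k, \sum_(i < l) nb i)) (hG : \rank G = k)
  (H : 'M[L]_(\sum_(i < l) nb i - k, \sum_(i < l) nb i))
  (hH : \rank H = (\sum_(i < l) nb i - k)%N)
  (hGH : G *m H^T = 0)
  (s : nat) (hs : (0 < s)%N)
  (E : 'M[L]_(s, \sum_(i < l) nb i))
  (t : 'I_l -> nat) (ht : forall i, rkq b (submxrow E i) = t i)
  (htlt : (\sum_(i < l) t i < \sum_(i < l) nb i - k)%N)
  (P : 'M[L]_(\sum_(i < l) nb i - k))
  (hP : \rank P = (\sum_(i < l) nb i - k)%N)
  (hech : row_echelon (P *m (H *m E^T))) :
  (\sum_(i < l) nb i - k - \sum_(i < l) t i <= #|zero_rows (P *m (H *m E^T))|)%N /\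
  (rows_of (zero_rows (P *m (H *m E^T))) (P *m H) ==
     kermx E^T :&: kermx G^T)%MS /\
  (rows_of (zero_rows (P *m (H *m E^T))) (P *m H) == kermx E^T :&: H)%MS.
Proof.
set R := rows_of _ (P *m H).
have eqR_capH : (R :=: kermx E^T :&: H)%MS.
  have := rows_of_zero_rows (P *m H) E^T; rewrite -mulmxA => /(_ hech) /eqmxP.
  move/eqmx_trans; apply.
  by apply: cap_eqmx => //; apply: eqmxMfull; rewrite /row_full hP.
have eqH_kerG : (H :=: kermx G^T)%MS by apply: eqmx_kermx_tr; rewrite // hG.
have rankE_le_t : (\rank E <= \sum_i t i)%N.
  apply: leq_trans (mxrank_le_sum_submxrow E) _.
  by apply: leq_sum => i _; rewrite -ht (mxrank_le_rkq hb).
split.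
  apply: leq_trans _ (rank_leq_row R); rewrite eqR_capH.
  apply: leq_trans _ (mxrank_cap_kermx_ge E H).
  by rewrite hH leq_sub2l.
split; apply/eqmxP; last exact: eqR_capH.
exact: eqmx_trans eqR_capH (cap_eqmx (eqmx_refl _) eqH_kerG).
Qed.
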